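(* The fixed points of the map $T_1$ (i.e. $F\in\Gamma_0(\mathbb{R}_+)$ with $T_1(F)=F$) are exactly the functions $F(s)=c|s-1|$ with $c\in[0,+\infty]$, where for $c=+\infty$ this means $F=I_{\{1\}}$ ($F(1)=0$, $F(s)=+\infty$ for $s\neq1$). Moreover, for $G\in\Gamma_0(\mathbb{R}_+)$, the marginal perspective function $H_G$ is a metric on $[0,+\infty)$ if and only if there is $c\in(0,+\infty)$ with $H_G(r,t)=c|r-t|$ for all $r,t\ge0$.
   Context: $\Gamma_0(\mathbb{R}_+)$ is the set of functions $F:[0,\infty)\to[0,\infty]$ that are convex, lower semicontinuous, with $F(1)=0$. For $F\in\Gamma_0(\mathbb{R}_+)$: $\mathrm{rec}(F)(r)=\lim_{\alpha\to\infty}F(1+\alpha r)/\alpha$; the perspective function is $\hat F(r,t)=tF(r/t)$ for $t>0$, $\hat F(r,0)=\mathrm{rec}(F)(r)$. The marginal perspective function $H_F$ is the lower semicontinuous envelope of $\tilde H_F(r_1,r_2)=\inf_{\theta>0}[\hat F(\theta,r_1)+\hat F(\theta,r_2)]$; it is symmetric, jointly convex, positively $1$-homogeneous and vanishes on the diagonal. $T_1(F)(s)=H_F(1,s)$. A metric on $[0,\infty)$ is a function $D:[0,\infty)^2\to[0,\infty)$ with $D(x,y)=0\iff x=y$, symmetric, satisfying the triangle inequality. *)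

From Stdlib Require Import Reals Lra ClassicalEpsilon.
Open Scope R_scope.

(* Extended reals with a top element +oo; used for values in [0, +oo]. *)
Inductive ER : Type := Fin (x : R) | PInf.

Definition leE (a b : ER) : Prop :=
  match a, b with
  | Fin x, Fin y => x <= y
  | _, PInf => True
  | PInf, Fin _ => False
  end.

Definition ltE (a b : ER) : Prop :=
  match a, b with
  | Fin x, Fin y => x < y
  | Fin _, PInf => True
  | PInf, _ => False
  end.

Definition addE (a b : ER) : ER :=
  match a, b with
  | Fin x, Fin y => Fin (x + y)
  | _, _ => PInf
  end.

Definition scalE (t : R) (a : ER) : ER :=
  match a with
  | Fin x => Fin (t * x)
  | PInf => PInf
  end.

Definition is_lubE (P : ER -> Prop) (s : ER) : Prop :=
  (forall x, P x -> leE x s) /\ (forall b, (forall x, P x -> leE x b) -> leE s b).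
Definition is_glbE (P : ER -> Prop) (s : ER) : Prop :=
  (forall x, P x -> leE s x) /\ (forall b, (forall x, P x -> leE b x) -> leE b s).

Definition supE (P : ER -> Prop) : ER := epsilon (inhabits PInf) (is_lubE P).
Definition infE (P : ER -> Prop) : ER := epsilon (inhabits PInf) (is_glbE P).

(* Functions on [0,+oo) are modelled as R -> ER; only values on [0,+oo) matter. *)

Definition convex_on_Rplus (F : R -> ER) : Prop :=
  forall x y l, 0 <= x -> 0 <= y -> 0 < l < 1 ->
    leE (F (l * x + (1 - l) * y)) (addE (scalE l (F x)) (scalE (1 - l) (F y))).

Definition lsc_on_Rplus (F : R -> ER) : Prop :=
  forall x a, 0 <= x -> ltE (Fin a) (F x) ->
    exists d, 0 < d /\ forall y, 0 <= y -> Rabs (y - x) < d -> ltE (Fin a) (F y).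

Definition Gamma0 (F : R -> ER) : Prop :=
  (forall x, 0 <= x -> leE (Fin 0) (F x)) /\
  convex_on_Rplus F /\ lsc_on_Rplus F /\ F 1 = Fin 0.

(* recession function: rec(F)(r) = lim_{a->oo} F(1+a r)/a, written as the
   (standard, equal for F in Gamma0) supremum over a > 0 of (F(1+a r)-F(1))/a *)
Definition recF (F : R -> ER) (r : R) : ER :=
  supE (fun v => exists a, 0 < a /\ v = scalE (/ a) (F (1 + a * r))).

Definition persp (F : R -> ER) (r t : R) : ER :=
  if Rlt_dec 0 t then scalE t (F (r / t)) else recF F r.

Definition tildeH (F : R -> ER) (r1 r2 : R) : ER :=
  infE (fun v => exists th, 0 < th /\ v = addE (persp F th r1) (persp F th r2)).

Definition lsc2_on_Rplus (g : R -> R -> ER) : Prop :=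
  forall x1 x2 a, 0 <= x1 -> 0 <= x2 -> ltE (Fin a) (g x1 x2) ->
    exists d, 0 < d /\ forall y1 y2, 0 <= y1 -> 0 <= y2 ->
      Rabs (y1 - x1) < d -> Rabs (y2 - x2) < d -> ltE (Fin a) (g y1 y2).

Definition lsc_envelope (h : R -> R -> ER) (r1 r2 : R) : ER :=
  supE (fun v => exists g : R -> R -> ER,
          lsc2_on_Rplus g /\
          (forall y1 y2, 0 <= y1 -> 0 <= y2 -> leE (g y1 y2) (h y1 y2)) /\
          v = g r1 r2).

Definition HF (F : R -> ER) : R -> R -> ER := lsc_envelope (tildeH F).

Definition T1 (F : R -> ER) (s : R) : ER := HF F 1 s.

Definition is_metric_Rplus (D : R -> R -> ER) : Prop :=
  (forall x y, 0 <= x -> 0 <= y -> exists d, 0 <= d /\ D x y = Fin d) /\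
  (forall x y, 0 <= x -> 0 <= y -> (D x y = Fin 0 <-> x = y)) /\
  (forall x y, 0 <= x -> 0 <= y -> D x y = D y x) /\
  (forall x y z, 0 <= x -> 0 <= y -> 0 <= z -> leE (D x z) (addE (D x y) (D y z))).

From Stdlib Require Import Reals Lra ClassicalEpsilon Classical.
Open Scope R_scope.

(* A fixed point [F] of [T1] satisfies [F s <= F th + s F (th / s)]: [F] behaves
   like a distance to [1]. Taking [th = 1] at [s] and [/ s] gives
   [F s = s F (/ s)]; iterating along the powers of [y > 1] bounds the slope
   [F z / (z - 1)] at [y ^ n] by the slope at [y], while convexity and [F 1 = 0]
   make this slope nondecreasing. So the slope is constant on [(1, +oo)]: [F] is
   [c |s - 1|] or infinite off [1], and convexity together with the recession
   bound fixes [F 0]. Conversely these [F] have marginal perspective [c |r - t|],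
   resp. the indicator of the diagonal.
   The perspective of a convex [G] with [G 1 = 0] is positively homogeneous and
   does not increase under [(r, t) |-> (x + r, x + t)], and both properties pass
   to [H_G]; a metric on [[0, +oo)] with these properties is [c |r - t|] with
   [c = H_G(0, 1)]. *)

(** * Order and arithmetic on [ER] *)

Lemma leE_refl a : leE a a.
Proof. destruct a; simpl; auto; lra. Qed.

Lemma leE_trans a b c : leE a b -> leE b c -> leE a c.
Proof. destruct a, b, c; simpl; intros; auto; try lra; tauto. Qed.

Lemma leE_PInf a : leE a PInf.
Proof. destruct a; exact I. Qed.

Lemma leE_antisym a b : leE a b -> leE b a -> a = b.
Proof. destruct a, b; simpl; intros; try tauto. f_equal; lra. Qed.

Lemma ltE_of_not_leE a b : ~ leE a b -> ltE b a.
Proof. destruct a, b; simpl; intros; auto; try lra; tauto. Qed.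

Lemma leE_of_not_ltE a b : ~ ltE a b -> leE b a.
Proof. destruct a, b; simpl; intros; auto; try lra; tauto. Qed.

Lemma ltE_nleE a b : ltE a b -> ~ leE b a.
Proof. destruct a, b; simpl; intros; auto; lra. Qed.

Lemma ltE_leE a b : ltE a b -> leE a b.
Proof. destruct a, b; simpl; auto; lra. Qed.

Lemma leE_addE a b c d : leE a b -> leE c d -> leE (addE a c) (addE b d).
Proof. destruct a, b, c, d; simpl; intros; auto; lra. Qed.

Lemma leE_scalE t a b : 0 <= t -> leE a b -> leE (scalE t a) (scalE t b).
Proof. destruct a, b; simpl; intros; auto. apply Rmult_le_compat_l; auto. Qed.

Lemma scalE_scalE t u a : scalE t (scalE u a) = scalE (t * u) a.
Proof. destruct a; simpl; auto. f_equal; ring. Qed.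

Lemma scalE_addE t a b : scalE t (addE a b) = addE (scalE t a) (scalE t b).
Proof. destruct a, b; simpl; auto. f_equal; ring. Qed.

Lemma scalE1 a : scalE 1 a = a.
Proof. destruct a; simpl; auto. f_equal; ring. Qed.

Lemma scalE0 t : scalE t (Fin 0) = Fin 0.
Proof. simpl. f_equal; ring. Qed.

Lemma addE0l a : addE (Fin 0) a = a.
Proof. destruct a; simpl; auto. f_equal; ring. Qed.

Lemma addE0r a : addE a (Fin 0) = a.
Proof. destruct a; simpl; auto. f_equal; ring. Qed.

Lemma addE_ge0 a b : leE (Fin 0) a -> leE (Fin 0) b -> leE (Fin 0) (addE a b).
Proof. destruct a, b; simpl; intros; auto; lra. Qed.

Lemma scalE_ge0 t a : 0 <= t -> leE (Fin 0) a -> leE (Fin 0) (scalE t a).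
Proof. destruct a; simpl; intros; auto. apply Rmult_le_pos; auto. Qed.

Lemma supE_lub P : (exists x, P x) -> is_lubE P (supE P).
Proof.
  intros Hne. unfold supE. apply epsilon_spec.
  destruct (classic (P PInf)) as [HP|HP].
  - exists PInf. split; [intros x _; apply leE_PInf | intros b Hb; exact (Hb PInf HP)].
  - assert (HE : exists r, P (Fin r)).
    { destruct Hne as [[r|] Hx]; [exists r; auto | tauto]. }
    destruct (classic (bound (fun r => P (Fin r)))) as [Hb|Hb].
    + destruct (completeness _ Hb HE) as [m [Hm1 Hm2]].
      exists (Fin m). split.
      * intros [r|] Hx; [apply Hm1; auto | tauto].
      * intros [y|] Hub; simpl; auto.
        apply Hm2. intros r Hr. exact (Hub (Fin r) Hr).
    + exists PInf. split; [intros x _; apply leE_PInf|].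
      intros [y|] Hub; simpl; auto.
      apply Hb. exists y. intros r Hr. exact (Hub (Fin r) Hr).
Qed.

Lemma supE_ub P x : P x -> leE x (supE P).
Proof. intros Hx. apply (supE_lub P (ex_intro _ x Hx)); auto. Qed.

Lemma supE_least P b : (exists x, P x) -> (forall x, P x -> leE x b) -> leE (supE P) b.
Proof. intros Hne H. apply (supE_lub P Hne); auto. Qed.

(* [ER] has no bottom element, so the infimum needs a finite lower bound. *)
Lemma infE_glb P m : (forall x, P x -> leE (Fin m) x) -> is_glbE P (infE P).
Proof.
  intros Hlow. unfold infE. apply epsilon_spec.
  destruct (classic (exists r, P (Fin r))) as [[r0 Hr0]|Hno].
  - set (E := fun r => P (Fin (- r))).
    assert (Hb : bound E).
    { exists (- m). intros r Hr. specialize (Hlow _ Hr). simpl in Hlow. lra. }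
    assert (HE : exists r, E r).
    { exists (- r0). unfold E. rewrite Ropp_involutive. auto. }
    destruct (completeness _ Hb HE) as [s [Hs1 Hs2]].
    exists (Fin (- s)). split.
    + intros [r|] Hx; simpl; auto.
      assert (E (- r)) by (unfold E; rewrite Ropp_involutive; auto).
      specialize (Hs1 _ H). lra.
    + intros [y|] Hlb; simpl; [|exact (Hlb _ Hr0)].
      assert (s <= - y); [|lra]. apply Hs2. intros r Hr.
      specialize (Hlb _ Hr). simpl in Hlb. lra.
  - exists PInf. split.
    + intros [r|] Hx; simpl; auto. apply Hno; eauto.
    + intros b _. apply leE_PInf.
Qed.

Lemma infE_lb P m x : (forall y, P y -> leE (Fin m) y) -> P x -> leE (infE P) x.
Proof. intros Hlow Hx. apply (infE_glb P m Hlow); auto. Qed.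

Lemma infE_greatest P m b :
  (forall y, P y -> leE (Fin m) y) -> (forall y, P y -> leE b y) -> leE b (infE P).
Proof. intros Hlow H. apply (infE_glb P m Hlow); auto. Qed.

(** * Perspective functions *)

Lemma recF_ge F r a : 0 < a -> leE (scalE (/ a) (F (1 + a * r))) (recF F r).
Proof. intros Ha. apply supE_ub. exists a; auto. Qed.

Lemma recF_le F r b :
  (forall a, 0 < a -> leE (scalE (/ a) (F (1 + a * r))) b) -> leE (recF F r) b.
Proof.
  intros H. apply supE_least.
  - exists (scalE (/ 1) (F (1 + 1 * r))), 1. split; auto; lra.
  - intros x [a [Ha ->]]. auto.
Qed.

Lemma persp_pos F r t : 0 < t -> persp F r t = scalE t (F (r / t)).
Proof. intros Ht. unfold persp. destruct (Rlt_dec 0 t); [auto | lra]. Qed.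

Lemma persp_r0 F r : persp F r 0 = recF F r.
Proof. unfold persp. destruct (Rlt_dec 0 0); [lra | auto]. Qed.

Lemma persp_ge0 F r t : Gamma0 F -> 0 < r -> leE (Fin 0) (persp F r t).
Proof.
  intros [Hge0 _] Hr. unfold persp. destruct (Rlt_dec 0 t) as [Ht|Ht].
  - apply scalE_ge0; [lra|]. apply Hge0. apply Rlt_le, Rdiv_lt_0_compat; auto.
  - eapply leE_trans; [|apply (recF_ge F r 1); lra].
    apply scalE_ge0; [apply Rlt_le, Rinv_0_lt_compat; lra|]. apply Hge0. lra.
Qed.

Lemma persp_scale F l r t : 0 < l -> 0 < r -> 0 <= t ->
  leE (persp F (l * r) (l * t)) (scalE l (persp F r t)).
Proof.
  intros Hl Hr Ht. destruct (Rle_lt_or_eq_dec 0 t Ht) as [Ht'|<-].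
  - rewrite !persp_pos, scalE_scalE by nra.
    replace (l * r / (l * t)) with (r / t) by (field; lra). apply leE_refl.
  - rewrite Rmult_0_r, !persp_r0. apply recF_le. intros a Ha.
    replace (scalE (/ a) (F (1 + a * (l * r)))) with
      (scalE l (scalE (/ (a * l)) (F (1 + (a * l) * r)))).
    + apply leE_scalE; [lra|]. apply recF_ge. nra.
    + rewrite scalE_scalE. f_equal; [field; lra | f_equal; ring].
Qed.

(* Convexity between [r / t] and the zero [1] of [F]. *)
Lemma persp_translate F x r t : Gamma0 F -> 0 < x -> 0 < r -> 0 <= t ->
  leE (persp F (x + r) (x + t)) (persp F r t).
Proof.
  intros [_ [Hconv [_ H1]]] Hx Hr Ht. rewrite persp_pos by lra.
  destruct (Rle_lt_or_eq_dec 0 t Ht) as [Ht'|<-].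
  - rewrite persp_pos by lra.
    assert (Hl : 0 < t / (x + t) < 1).
    { split; [apply Rdiv_lt_0_compat; lra|].
      apply Rmult_lt_reg_r with (x + t); [lra|]. field_simplify; lra. }
    pose proof (Hconv (r / t) 1 (t / (x + t))
      ltac:(apply Rlt_le, Rdiv_lt_0_compat; lra) ltac:(lra) Hl) as H.
    rewrite H1, scalE0, addE0r in H.
    replace (t / (x + t) * (r / t) + (1 - t / (x + t)) * 1) with ((x + r) / (x + t))
      in H by (field; lra).
    eapply leE_trans; [apply leE_scalE; [lra | exact H]|].
    rewrite scalE_scalE. replace ((x + t) * (t / (x + t))) with t by (field; lra).
    apply leE_refl.
  - rewrite persp_r0, Rplus_0_r.
    eapply leE_trans; [|apply (recF_ge F r (/ x)); apply Rinv_0_lt_compat; lra].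
    rewrite Rinv_inv. replace ((x + r) / x) with (1 + / x * r) by (field; lra).
    apply leE_refl.
Qed.

Lemma tildeH_le_persp F r1 r2 th : Gamma0 F -> 0 < th ->
  leE (tildeH F r1 r2) (addE (persp F th r1) (persp F th r2)).
Proof.
  intros HF0 Hth. apply (infE_lb _ 0).
  - intros x [th' [Hth' ->]]. apply addE_ge0; apply persp_ge0; auto.
  - exists th; auto.
Qed.

Lemma tildeH_greatest F r1 r2 b : Gamma0 F ->
  (forall th, 0 < th -> leE b (addE (persp F th r1) (persp F th r2))) ->
  leE b (tildeH F r1 r2).
Proof.
  intros HF0 H. apply (infE_greatest _ 0).
  - intros x [th [Hth ->]]. apply addE_ge0; apply persp_ge0; auto.
  - intros x [th [Hth ->]]. auto.
Qed.

Lemma tildeH_ge0 F r1 r2 : Gamma0 F -> leE (Fin 0) (tildeH F r1 r2).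
Proof.
  intros HF0. apply tildeH_greatest; auto.
  intros th Hth. apply addE_ge0; apply persp_ge0; auto.
Qed.

Lemma tildeH_lt F r1 r2 v : Gamma0 F -> ltE (tildeH F r1 r2) (Fin v) ->
  exists th, 0 < th /\ ltE (addE (persp F th r1) (persp F th r2)) (Fin v).
Proof.
  intros HF0 Hlt. apply NNPP. intros Hno. apply (ltE_nleE _ _ Hlt).
  apply tildeH_greatest; auto. intros th Hth.
  apply leE_of_not_ltE. intros H. apply Hno. eauto.
Qed.

Lemma tildeH_subhomogeneous F l y1 y2 : Gamma0 F -> 0 < l -> 0 <= y1 -> 0 <= y2 ->
  leE (tildeH F (l * y1) (l * y2)) (scalE l (tildeH F y1 y2)).
Proof.
  intros HF0 Hl Hy1 Hy2.
  replace (tildeH F (l * y1) (l * y2))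
    with (scalE l (scalE (/ l) (tildeH F (l * y1) (l * y2))))
    by (rewrite scalE_scalE, Rinv_r, scalE1 by lra; reflexivity).
  apply leE_scalE; [lra|]. apply tildeH_greatest; auto. intros th Hth.
  replace (addE (persp F th y1) (persp F th y2))
    with (scalE (/ l) (scalE l (addE (persp F th y1) (persp F th y2))))
    by (rewrite scalE_scalE, Rinv_l, scalE1 by lra; reflexivity).
  apply leE_scalE; [apply Rlt_le, Rinv_0_lt_compat; lra|].
  rewrite scalE_addE.
  eapply leE_trans; [apply (tildeH_le_persp F _ _ (l * th)); auto; nra|].
  apply leE_addE; apply persp_scale; auto.
Qed.

Lemma tildeH_translate F x y1 y2 : Gamma0 F -> 0 < x -> 0 <= y1 -> 0 <= y2 ->
  leE (tildeH F (x + y1) (x + y2)) (tildeH F y1 y2).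
Proof.
  intros HF0 Hx Hy1 Hy2. apply tildeH_greatest; auto. intros th Hth.
  eapply leE_trans; [apply (tildeH_le_persp F _ _ (x + th)); auto; lra|].
  apply leE_addE; apply persp_translate; auto.
Qed.

(** * Lower semicontinuous envelopes *)

Lemma lsc2_const v : lsc2_on_Rplus (fun _ _ => v).
Proof. intros x1 x2 a _ _ Ha. exists 1. split; [lra | auto]. Qed.

Lemma Rabs_sub_triang x y z : Rabs (x - z) <= Rabs (x - y) + Rabs (y - z).
Proof. replace (x - z) with ((x - y) + (y - z)) by ring. apply Rabs_triang. Qed.

Definition box_indicator (p1 p2 d : R) (v : ER) (y1 y2 : R) : ER :=
  if Rlt_dec (Rabs (y1 - p1)) d then
    if Rlt_dec (Rabs (y2 - p2)) d then v else Fin 0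
  else Fin 0.

Lemma lsc2_box_indicator p1 p2 d v : leE (Fin 0) v -> lsc2_on_Rplus (box_indicator p1 p2 d v).
Proof.
  intros Hv x1 x2 a _ _ Ha.
  assert (Hge0 : forall y1 y2, leE (Fin 0) (box_indicator p1 p2 d v y1 y2)).
  { intros y1 y2. unfold box_indicator.
    destruct (Rlt_dec _ d); [destruct (Rlt_dec _ d)|]; simpl; auto; lra. }
  destruct (Rlt_le_dec a 0) as [Ha0|Ha0].
  { exists 1. split; [lra|]. intros y1 y2 _ _ _ _.
    specialize (Hge0 y1 y2). destruct (box_indicator _ _ _ _ y1 y2); simpl in *; auto; lra. }
  unfold box_indicator in Ha |- *.
  destruct (Rlt_dec (Rabs (x1 - p1)) d) as [h1|h1];
    [destruct (Rlt_dec (Rabs (x2 - p2)) d) as [h2|h2]|]; simpl in Ha; try lra.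
  exists (Rmin (d - Rabs (x1 - p1)) (d - Rabs (x2 - p2))).
  split; [apply Rmin_glb_lt; lra|]. intros y1 y2 _ _ Hy1 Hy2.
  pose proof (Rmin_l (d - Rabs (x1 - p1)) (d - Rabs (x2 - p2))).
  pose proof (Rmin_r (d - Rabs (x1 - p1)) (d - Rabs (x2 - p2))).
  pose proof (Rabs_sub_triang y1 x1 p1). pose proof (Rabs_sub_triang y2 x2 p2).
  destruct (Rlt_dec (Rabs (y1 - p1)) d); [|lra].
  destruct (Rlt_dec (Rabs (y2 - p2)) d); [auto | lra].
Qed.

Section LscEnvelope.

Variable h : R -> R -> ER.
Hypothesis h_ge0 : forall y1 y2, 0 <= y1 -> 0 <= y2 -> leE (Fin 0) (h y1 y2).

Let envelope_nonempty p1 p2 : exists v, exists g : R -> R -> ER,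
  lsc2_on_Rplus g /\ (forall y1 y2, 0 <= y1 -> 0 <= y2 -> leE (g y1 y2) (h y1 y2)) /\
  v = g p1 p2.
Proof. exists (Fin 0), (fun _ _ => Fin 0). split; [apply lsc2_const | auto]. Qed.

Lemma lsc_envelope_ge g p1 p2 : lsc2_on_Rplus g ->
  (forall y1 y2, 0 <= y1 -> 0 <= y2 -> leE (g y1 y2) (h y1 y2)) ->
  leE (g p1 p2) (lsc_envelope h p1 p2).
Proof. intros Hg Hgh. apply supE_ub. eauto. Qed.

Lemma lsc_envelope_ge0 p1 p2 : leE (Fin 0) (lsc_envelope h p1 p2).
Proof. apply (lsc_envelope_ge (fun _ _ => Fin 0)); [apply lsc2_const | auto]. Qed.

Lemma lsc_envelope_le p1 p2 : 0 <= p1 -> 0 <= p2 -> leE (lsc_envelope h p1 p2) (h p1 p2).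
Proof.
  intros Hp1 Hp2. apply supE_least; [apply envelope_nonempty|].
  intros x [g [_ [Hgh ->]]]. auto.
Qed.

Lemma lsc_envelope_le_near p1 p2 b : 0 <= p1 -> 0 <= p2 ->
  (forall d e, 0 < d -> 0 < e -> exists y1 y2, 0 <= y1 /\ 0 <= y2 /\
     Rabs (y1 - p1) < d /\ Rabs (y2 - p2) < d /\ leE (h y1 y2) (Fin (b + e))) ->
  leE (lsc_envelope h p1 p2) (Fin b).
Proof.
  intros Hp1 Hp2 Hnear. apply supE_least; [apply envelope_nonempty|].
  intros x [g [Hg [Hgh ->]]]. apply NNPP. intros Hno. apply ltE_of_not_leE in Hno.
  assert (Ha : exists a, b < a /\ ltE (Fin a) (g p1 p2)).
  { destruct (g p1 p2) as [v|]; simpl in Hno.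
    - exists ((b + v) / 2). simpl. split; lra.
    - exists (b + 1). simpl. split; [lra | auto]. }
  destruct Ha as [a [Hab Ha]].
  destruct (Hg p1 p2 a Hp1 Hp2 Ha) as [d [Hd Hball]].
  destruct (Hnear d (a - b) Hd ltac:(lra)) as [y1 [y2 [Hy1 [Hy2 [Hd1 [Hd2 Hhy]]]]]].
  apply (ltE_nleE _ _ (Hball y1 y2 Hy1 Hy2 Hd1 Hd2)).
  eapply leE_trans; [apply Hgh; auto|].
  replace a with (b + (a - b)) by ring. exact Hhy.
Qed.

(* Otherwise the indicator of the box, scaled by [b + e], would be an
   lsc minorant of [h] exceeding the envelope at the centre. *)
Lemma lsc_envelope_near p1 p2 b : lsc_envelope h p1 p2 = Fin b ->
  forall d e, 0 < d -> 0 < e -> exists y1 y2, 0 <= y1 /\ 0 <= y2 /\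
     Rabs (y1 - p1) < d /\ Rabs (y2 - p2) < d /\ ltE (h y1 y2) (Fin (b + e)).
Proof.
  intros Hb d e Hd He. apply NNPP. intros Hno.
  assert (Hb0 : 0 <= b) by (pose proof (lsc_envelope_ge0 p1 p2) as H; rewrite Hb in H; exact H).
  assert (Hmin : forall y1 y2, 0 <= y1 -> 0 <= y2 ->
            leE (box_indicator p1 p2 d (Fin (b + e)) y1 y2) (h y1 y2)).
  { intros y1 y2 Hy1 Hy2. unfold box_indicator.
    destruct (Rlt_dec (Rabs (y1 - p1)) d); [destruct (Rlt_dec (Rabs (y2 - p2)) d)|];
      try (apply h_ge0; auto).
    apply leE_of_not_ltE. intros Hlt. apply Hno. exists y1, y2. repeat split; auto. }
  pose proof (lsc_envelope_ge _ p1 p2 (lsc2_box_indicator p1 p2 d (Fin (b + e)) ltac:(simpl; lra)) Hmin)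
    as H.
  rewrite Hb in H. unfold box_indicator in H.
  rewrite !Rminus_diag, !Rabs_R0 in H. destruct (Rlt_dec 0 d); simpl in H; lra.
Qed.

Lemma lsc_envelope_subhomogeneous l p1 p2 : 0 < l -> 0 <= p1 -> 0 <= p2 ->
  (forall y1 y2, 0 <= y1 -> 0 <= y2 -> leE (h (l * y1) (l * y2)) (scalE l (h y1 y2))) ->
  leE (lsc_envelope h (l * p1) (l * p2)) (scalE l (lsc_envelope h p1 p2)).
Proof.
  intros Hl Hp1 Hp2 Hhom. destruct (lsc_envelope h p1 p2) as [b|] eqn:Hb; [|apply leE_PInf].
  apply lsc_envelope_le_near; try nra. intros d e Hd He.
  destruct (lsc_envelope_near p1 p2 b Hb (d / l) (e / l)) as
    [y1 [y2 [Hy1 [Hy2 [Hd1 [Hd2 Hlt]]]]]]; try (apply Rdiv_lt_0_compat; lra).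
  assert (Hscale : forall y p, Rabs (y - p) < d / l -> Rabs (l * y - l * p) < d).
  { intros y p H. replace (l * y - l * p) with (l * (y - p)) by ring.
    rewrite Rabs_mult, (Rabs_pos_eq l) by lra.
    apply Rmult_lt_compat_l with (r := l) in H; [|lra].
    replace (l * (d / l)) with d in H by (field; lra). exact H. }
  exists (l * y1), (l * y2). repeat split; try nra; auto.
  eapply leE_trans; [apply Hhom; auto|].
  eapply leE_trans; [apply leE_scalE, ltE_leE, Hlt; lra|].
  simpl. right. field. lra.
Qed.

Lemma lsc_envelope_translate x p1 p2 : 0 <= x -> 0 <= p1 -> 0 <= p2 ->
  (forall y1 y2, 0 <= y1 -> 0 <= y2 -> leE (h (x + y1) (x + y2)) (h y1 y2)) ->
  leE (lsc_envelope h (x + p1) (x + p2)) (lsc_envelope h p1 p2).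
Proof.
  intros Hx Hp1 Hp2 Htr. destruct (lsc_envelope h p1 p2) as [b|] eqn:Hb; [|apply leE_PInf].
  apply lsc_envelope_le_near; try lra. intros d e Hd He.
  destruct (lsc_envelope_near p1 p2 b Hb d e Hd He) as
    [y1 [y2 [Hy1 [Hy2 [Hd1 [Hd2 Hlt]]]]]].
  exists (x + y1), (x + y2).
  replace (x + y1 - (x + p1)) with (y1 - p1) by ring.
  replace (x + y2 - (x + p2)) with (y2 - p2) by ring.
  repeat split; try lra.
  eapply leE_trans; [apply Htr; auto | apply ltE_leE, Hlt].
Qed.

End LscEnvelope.

Lemma HF_ge0 F p1 p2 : Gamma0 F -> leE (Fin 0) (HF F p1 p2).
Proof. intros HF0. exact (lsc_envelope_ge0 _ (fun y1 y2 _ _ => tildeH_ge0 F y1 y2 HF0) p1 p2). Qed.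

Lemma HF_le_persp F p1 p2 th : Gamma0 F -> 0 <= p1 -> 0 <= p2 -> 0 < th ->
  leE (HF F p1 p2) (addE (persp F th p1) (persp F th p2)).
Proof.
  intros HF0 Hp1 Hp2 Hth. eapply leE_trans; [apply (lsc_envelope_le _ (fun y1 y2 _ _ => tildeH_ge0 F y1 y2 HF0)); auto|].
  apply tildeH_le_persp; auto.
Qed.

Lemma HF_le_near F p1 p2 b : Gamma0 F -> 0 <= p1 -> 0 <= p2 ->
  (forall d e, 0 < d -> 0 < e -> exists y1 y2 th, 0 <= y1 /\ 0 <= y2 /\
     Rabs (y1 - p1) < d /\ Rabs (y2 - p2) < d /\ 0 < th /\
     leE (addE (persp F th y1) (persp F th y2)) (Fin (b + e))) ->
  leE (HF F p1 p2) (Fin b).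
Proof.
  intros HF0 Hp1 Hp2 Hnear. apply (lsc_envelope_le_near _ (fun y1 y2 _ _ => tildeH_ge0 F y1 y2 HF0)); auto.
  intros d e Hd He.
  destruct (Hnear d e Hd He) as [y1 [y2 [th [Hy1 [Hy2 [Hd1 [Hd2 [Hth Hle]]]]]]]].
  exists y1, y2. repeat split; auto.
  eapply leE_trans; [apply tildeH_le_persp|]; eauto.
Qed.

Lemma HF_near F p1 p2 b : Gamma0 F -> HF F p1 p2 = Fin b ->
  forall d e, 0 < d -> 0 < e -> exists y1 y2 th, 0 <= y1 /\ 0 <= y2 /\
     Rabs (y1 - p1) < d /\ Rabs (y2 - p2) < d /\ 0 < th /\
     ltE (addE (persp F th y1) (persp F th y2)) (Fin (b + e)).
Proof.
  intros HF0 Hb d e Hd He.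
  destruct (lsc_envelope_near _ (fun y1 y2 _ _ => tildeH_ge0 F y1 y2 HF0) p1 p2 b Hb d e Hd He) as [y1 [y2 [Hy1 [Hy2 [Hd1 [Hd2 Hlt]]]]]].
  destruct (tildeH_lt F y1 y2 _ HF0 Hlt) as [th [Hth Hsum]].
  exists y1, y2, th. repeat split; auto.
Qed.

Lemma HF_subhomogeneous F l p1 p2 : Gamma0 F -> 0 < l -> 0 <= p1 -> 0 <= p2 ->
  leE (HF F (l * p1) (l * p2)) (scalE l (HF F p1 p2)).
Proof.
  intros HF0 Hl Hp1 Hp2. apply (lsc_envelope_subhomogeneous _ (fun y1 y2 _ _ => tildeH_ge0 F y1 y2 HF0)); auto.
  intros; apply tildeH_subhomogeneous; auto.
Qed.

Lemma HF_translate F x p1 p2 : Gamma0 F -> 0 < x -> 0 <= p1 -> 0 <= p2 ->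
  leE (HF F (x + p1) (x + p2)) (HF F p1 p2).
Proof.
  intros HF0 Hx Hp1 Hp2. apply (lsc_envelope_translate _ (fun y1 y2 _ _ => tildeH_ge0 F y1 y2 HF0)); auto; [lra|].
  intros; apply tildeH_translate; auto.
Qed.

(** * Homogeneous translation-subinvariant metrics *)

Section MetricLinear.

Variable D : R -> R -> ER.
Hypothesis D_metric : is_metric_Rplus D.
Hypothesis D_subhomogeneous : forall l p1 p2, 0 < l -> 0 <= p1 -> 0 <= p2 ->
  leE (D (l * p1) (l * p2)) (scalE l (D p1 p2)).
Hypothesis D_translate : forall x p1 p2, 0 < x -> 0 <= p1 -> 0 <= p2 ->
  leE (D (x + p1) (x + p2)) (D p1 p2).

(* Subhomogeneity applied with [t] and with [/ t] gives homogeneity. *)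
Lemma metric_from_origin : exists a, 0 < a /\ forall t, 0 <= t -> D 0 t = Fin (a * t).
Proof.
  destruct D_metric as [Dfin [Dzero _]].
  destruct (Dfin 0 1 ltac:(lra) ltac:(lra)) as [a [Ha0 Ha]].
  exists a. split.
  { destruct (Rle_lt_or_eq_dec 0 a Ha0) as [|<-]; auto.
    apply (Dzero 0 1) in Ha; lra. }
  intros t Ht. destruct (Rle_lt_or_eq_dec 0 t Ht) as [Ht'|<-].
  - destruct (Dfin 0 t ltac:(lra) Ht) as [v [_ Hv]]. rewrite Hv. f_equal.
    pose proof (D_subhomogeneous t 0 1 Ht' ltac:(lra) ltac:(lra)) as Hup.
    rewrite Rmult_0_r, Rmult_1_r, Hv, Ha in Hup. simpl in Hup.
    pose proof (D_subhomogeneous (/ t) 0 t ltac:(apply Rinv_0_lt_compat; lra)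
      ltac:(lra) Ht) as Hlow.
    rewrite Rmult_0_r, Rinv_l, Ha, Hv in Hlow by lra. simpl in Hlow.
    apply Rmult_le_compat_l with (r := t) in Hlow; [|lra].
    rewrite <- Rmult_assoc, Rinv_r, Rmult_1_l in Hlow by lra. lra.
  - rewrite Rmult_0_r. apply Dzero; lra.
Qed.

(* Translation invariance bounds [D r t] by [D 0 (t - r)], the triangle
   inequality through [0] bounds it from below by [D 0 t - D 0 r]. *)
Lemma metric_linear : exists c, 0 < c /\
  forall r t, 0 <= r -> 0 <= t -> D r t = Fin (c * Rabs (r - t)).
Proof.
  destruct D_metric as [Dfin [Dzero [Dsym Dtri]]].
  destruct metric_from_origin as [a [Ha D0]].
  assert (Hle : forall r t, 0 <= r -> r <= t -> D r t = Fin (a * Rabs (r - t))).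
  { intros r t Hr Hrt. rewrite Rabs_left1 by lra.
    destruct (Rle_lt_or_eq_dec 0 r Hr) as [Hr'|<-].
    - destruct (Dfin r t Hr ltac:(lra)) as [v [_ Hv]]. rewrite Hv. f_equal.
      pose proof (D_translate r 0 (t - r) Hr' ltac:(lra) ltac:(lra)) as Hup.
      rewrite Rplus_0_r, D0 in Hup by lra.
      replace (r + (t - r)) with t in Hup by ring. rewrite Hv in Hup. simpl in Hup.
      pose proof (Dtri 0 r t ltac:(lra) Hr ltac:(lra)) as Hlow.
      rewrite (D0 t), (D0 r), Hv in Hlow by lra. simpl in Hlow. lra.
    - rewrite D0 by lra. f_equal. ring. }
  exists a. split; auto. intros r t Hr Ht. destruct (Rle_dec r t).
  - apply Hle; auto.
  - rewrite Dsym, Hle, Rabs_minus_sym by (auto; lra). reflexivity.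
Qed.

End MetricLinear.

Lemma is_metric_Rplus_scaled_dist D c : 0 < c ->
  (forall r t, 0 <= r -> 0 <= t -> D r t = Fin (c * Rabs (r - t))) -> is_metric_Rplus D.
Proof.
  intros Hc HD. split; [|split; [|split]].
  - intros x y Hx Hy. exists (c * Rabs (x - y)). rewrite HD by auto.
    split; auto. apply Rmult_le_pos; [lra | apply Rabs_pos].
  - intros x y Hx Hy. rewrite HD by auto. split.
    + intros Hxy. injection Hxy as Hxy. apply Rmult_integral in Hxy.
      destruct Hxy as [|Hxy]; [lra|]. destruct (Req_dec x y) as [|Hne]; auto.
      exfalso. apply (Rabs_no_R0 (x - y)); [lra | auto].
    + intros ->. rewrite Rminus_diag, Rabs_R0, Rmult_0_r. reflexivity.
  - intros x y Hx Hy. rewrite !HD, Rabs_minus_sym by auto. reflexivity.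
  - intros x y z Hx Hy Hz. rewrite !HD by auto. simpl.
    pose proof (Rabs_sub_triang x y z). nra.
Qed.

(** * Fixed points of [T1] *)

Lemma persp_scaled_dist F c : (forall s, 0 <= s -> F s = Fin (c * Rabs (s - 1))) ->
  forall r t, 0 < r -> 0 <= t -> persp F r t = Fin (c * Rabs (r - t)).
Proof.
  intros HFc r t Hr Ht. destruct (Rle_lt_or_eq_dec 0 t Ht) as [Ht'|<-].
  - rewrite persp_pos by lra. rewrite HFc by (apply Rlt_le, Rdiv_lt_0_compat; lra).
    simpl. f_equal. replace (r - t) with (t * (r / t - 1)) by (field; lra).
    rewrite Rabs_mult, (Rabs_pos_eq t) by lra. ring.
  - rewrite persp_r0, Rminus_0_r, (Rabs_pos_eq r) by lra. apply leE_antisym.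
    + apply recF_le. intros a Ha. rewrite HFc by nra.
      replace (1 + a * r - 1) with (a * r) by ring.
      rewrite Rabs_pos_eq by nra. simpl. right. field. lra.
    + eapply leE_trans; [|apply (recF_ge F r 1); lra].
      rewrite HFc by lra. replace (1 + 1 * r - 1) with r by ring.
      rewrite Rinv_1, Rabs_pos_eq by lra. simpl. right. ring.
Qed.

Lemma lsc2_scaled_dist c : 0 <= c -> lsc2_on_Rplus (fun y1 y2 => Fin (c * Rabs (y1 - y2))).
Proof.
  intros Hc x1 x2 a _ _ Ha. simpl in Ha.
  set (gap := c * Rabs (x1 - x2) - a).
  exists (gap / (2 * c + 2)). split; [apply Rdiv_lt_0_compat; unfold gap; lra|].
  intros y1 y2 _ _ H1 H2. simpl.
  assert (Hgap : gap = (2 * c + 2) * (gap / (2 * c + 2))) by (field; lra).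
  pose proof (Rabs_sub_triang x1 y1 x2). pose proof (Rabs_sub_triang y1 y2 x2).
  rewrite (Rabs_minus_sym x1 y1) in *.
  assert (c * Rabs (x1 - x2) <= c * (Rabs (y1 - y2) + 2 * (gap / (2 * c + 2))))
    by (apply Rmult_le_compat_l; lra).
  unfold gap in *. nra.
Qed.

Lemma HF_scaled_dist F c : Gamma0 F -> 0 <= c ->
  (forall s, 0 <= s -> F s = Fin (c * Rabs (s - 1))) ->
  forall r t, 0 <= r -> 0 <= t -> HF F r t = Fin (c * Rabs (r - t)).
Proof.
  intros HF0 Hc HFc r t Hr Ht. pose proof (persp_scaled_dist F c HFc) as Hp.
  apply leE_antisym.
  - apply HF_le_near; auto. intros d e Hd He.
    exists (r + d / 2), (t + d / 2), (r + d / 2).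
    replace (r + d / 2 - r) with (d / 2) by ring.
    replace (t + d / 2 - t) with (d / 2) by ring.
    rewrite Rabs_pos_eq by lra. repeat split; try lra.
    rewrite !Hp by lra. simpl. rewrite Rminus_diag, Rabs_R0.
    replace (r + d / 2 - (t + d / 2)) with (r - t) by ring. lra.
  - apply (lsc_envelope_ge _ (fun y1 y2 => Fin (c * Rabs (y1 - y2)))).
    + apply lsc2_scaled_dist; auto.
    + intros y1 y2 Hy1 Hy2. apply tildeH_greatest; auto. intros th Hth.
      rewrite !Hp by auto. simpl.
      pose proof (Rabs_sub_triang y1 th y2). rewrite (Rabs_minus_sym y1 th) in H.
      nra.
Qed.

Lemma persp_indicator_finite F r t v :
  (forall s, 0 <= s -> F s = if Req_EM_T s 1 then Fin 0 else PInf) ->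
  0 < r -> 0 <= t -> persp F r t = Fin v -> t = r.
Proof.
  intros HFi Hr Ht Hv. destruct (Rle_lt_or_eq_dec 0 t Ht) as [Ht'|<-].
  - rewrite persp_pos, HFi in Hv by (try apply Rlt_le, Rdiv_lt_0_compat; lra).
    destruct (Req_EM_T (r / t) 1) as [E|]; [|discriminate].
    symmetry. apply Rdiv_diag_uniq. exact E.
  - rewrite persp_r0 in Hv. exfalso.
    pose proof (recF_ge F r 1 ltac:(lra)) as H. rewrite Hv, HFi in H by lra.
    destruct (Req_EM_T (1 + 1 * r) 1); [lra | exact H].
Qed.

Lemma HF_indicator F : Gamma0 F ->
  (forall s, 0 <= s -> F s = if Req_EM_T s 1 then Fin 0 else PInf) ->
  forall r t, 0 <= r -> 0 <= t -> HF F r t = if Req_EM_T r t then Fin 0 else PInf.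
Proof.
  intros HF0 HFi r t Hr Ht. destruct (Req_EM_T r t) as [<-|Hrt].
  - apply leE_antisym; [|apply HF_ge0; auto].
    apply HF_le_near; auto. intros d e Hd He.
    exists (r + d / 2), (r + d / 2), (r + d / 2).
    replace (r + d / 2 - r) with (d / 2) by ring.
    rewrite Rabs_pos_eq by lra. repeat split; try lra.
    destruct HF0 as [_ [_ [_ H1]]].
    rewrite persp_pos, Rdiv_diag, H1 by lra. simpl. lra.
  - destruct (HF F r t) as [b|] eqn:Hb; auto. exfalso.
    assert (Hd : 0 < Rabs (r - t) / 2).
    { apply Rdiv_lt_0_compat; [apply Rabs_pos_lt; lra | lra]. }
    destruct (HF_near F r t b HF0 Hb _ 1 Hd ltac:(lra)) as
      [y1 [y2 [th [Hy1 [Hy2 [Hd1 [Hd2 [Hth Hlt]]]]]]]].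
    destruct (persp F th y1) as [v1|] eqn:E1; [|destruct (persp F th y2); contradiction].
    destruct (persp F th y2) as [v2|] eqn:E2; [|contradiction].
    apply persp_indicator_finite in E1, E2; auto. subst y1 y2.
    pose proof (Rabs_sub_triang r th t). rewrite (Rabs_minus_sym r th) in H. lra.
Qed.

Lemma T1_le_persp F s th : Gamma0 F -> 0 <= s -> 0 < th ->
  leE (T1 F s) (addE (F th) (persp F th s)).
Proof.
  intros HF0 Hs Hth. unfold T1.
  replace (F th) with (persp F th 1)
    by (rewrite persp_pos, Rdiv_1_r, scalE1 by lra; reflexivity).
  apply HF_le_persp; auto; lra.
Qed.

(* The slope [F z / (z - 1)] is nondecreasing on [(1, +oo)] since [F 1 = 0]. *)
Lemma Gamma0_slope_le F z1 z2 w2 : Gamma0 F -> 1 < z1 -> z1 < z2 -> F z2 = Fin w2 ->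
  exists w1, F z1 = Fin w1 /\ w1 * (z2 - 1) <= w2 * (z1 - 1).
Proof.
  intros [_ [Hconv [_ H1]]] Hz1 Hz12 Hw2.
  set (l := (z1 - 1) / (z2 - 1)).
  assert (Hl : l * (z2 - 1) = z1 - 1) by (unfold l; field; lra).
  assert (Hl0 : 0 < l < 1).
  { unfold l. split; [apply Rdiv_lt_0_compat; lra|].
    apply Rmult_lt_reg_r with (z2 - 1); [lra|]. field_simplify; lra. }
  pose proof (Hconv z2 1 l ltac:(lra) ltac:(lra) Hl0) as H.
  replace (l * z2 + (1 - l) * 1) with z1 in H by lra.
  rewrite Hw2, H1 in H. simpl in H.
  destruct (F z1) as [w1|]; [|contradiction].
  exists w1. split; auto.
  apply Rmult_le_compat_r with (r := z2 - 1) in H; [|lra]. nra.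
Qed.

Lemma Gamma0_half_le F : Gamma0 F -> leE (F (1 / 2)) (scalE (1 / 2) (F 0)).
Proof.
  intros [_ [Hconv [_ H1]]].
  pose proof (Hconv 0 1 (1 / 2) ltac:(lra) ltac:(lra) ltac:(lra)) as H.
  replace (1 / 2 * 0 + (1 - 1 / 2) * 1) with (1 / 2) in H by field.
  rewrite H1, scalE0, addE0r in H. exact H.
Qed.

Lemma exists_pow_gt y z : 1 < y -> exists n, z < y ^ n.
Proof.
  intros Hy. destruct (Pow_x_infinity y ltac:(rewrite Rabs_pos_eq; lra) (z + 1)) as [N HN].
  exists N. specialize (HN N (Nat.le_refl N)).
  rewrite Rabs_pos_eq in HN by (apply pow_le; lra). lra.
Qed.

(* The inequality [F s <= hat F(th, 1) + hat F(th, s)] satisfied by a fixed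
   point of [T1]. *)
Definition persp_triangle (F : R -> ER) : Prop :=
  forall s th, 0 < s -> 0 < th -> leE (F s) (addE (F th) (scalE s (F (th / s)))).

Section PerspTriangle.

Variable F : R -> ER.
Hypothesis F_Gamma0 : Gamma0 F.
Hypothesis F_triangle : persp_triangle F.

Lemma persp_triangle_inv s : 0 < s -> F s = scalE s (F (/ s)).
Proof.
  destruct F_Gamma0 as [_ [_ [_ H1]]]. intros Hs. apply leE_antisym.
  - pose proof (F_triangle s 1 Hs ltac:(lra)) as H. rewrite H1, addE0l in H.
    replace (1 / s) with (/ s) in H by (field; lra). exact H.
  - pose proof (F_triangle (/ s) 1 ltac:(apply Rinv_0_lt_compat; lra) ltac:(lra)) as H.
    rewrite H1, addE0l in H. replace (1 / / s) with s in H by (field; lra).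
    eapply leE_trans; [apply leE_scalE; [lra | exact H]|].
    rewrite scalE_scalE, Rinv_r, scalE1 by lra. apply leE_refl.
Qed.

(* The triangle inequality between [y ^ n], [y ^ (n + 1)] and the symmetry
   [F (/ y) = F y / y] give [F (y ^ (n + 1)) <= F (y ^ n) + y ^ n F y]. *)
Lemma persp_triangle_pow y v : 1 < y -> F y = Fin v ->
  forall n, exists w, F (y ^ n) = Fin w /\ w * (y - 1) <= v * (y ^ n - 1).
Proof.
  intros Hy Hv. destruct F_Gamma0 as [_ [_ [_ H1]]].
  pose proof (persp_triangle_inv y ltac:(lra)) as Hs. rewrite Hv in Hs.
  destruct (F (/ y)) as [u|] eqn:Hu; [|discriminate]. injection Hs as Hs.
  induction n as [|n IH].
  - exists 0. rewrite pow_O, H1. split; [reflexivity | lra].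
  - destruct IH as [w [Hw Hwle]].
    set (q := y ^ n) in *.
    assert (Hq : 0 < q) by (apply pow_lt; lra).
    assert (Hsq : y ^ S n = y * q) by reflexivity.
    pose proof (F_triangle (y * q) q ltac:(nra) Hq) as H.
    replace (q / (y * q)) with (/ y) in H by (field; lra).
    rewrite Hw, Hu in H. simpl in H. rewrite Hsq.
    destruct (F (y * q)) as [w'|]; [|contradiction].
    exists w'. split; auto. simpl in H.
    apply Rmult_le_compat_r with (r := y - 1) in H; [|lra]. nra.
Qed.

Lemma persp_triangle_finite y v z : 1 < y -> F y = Fin v -> 1 < z -> exists w, F z = Fin w.
Proof.
  intros Hy Hv Hz. destruct (exists_pow_gt y z Hy) as [n Hn].
  destruct (persp_triangle_pow y v Hy Hv n) as [w [Hw _]].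
  destruct (Gamma0_slope_le F z (y ^ n) w F_Gamma0 Hz Hn Hw) as [w1 [Hw1 _]]. eauto.
Qed.

(* Comparing with a power [q = z1 ^ n > z2]: the slope at [q] is at most the
   slope at [z1] by [persp_triangle_pow], and at least the slope at [z2]. *)
Lemma persp_triangle_slope_eq z1 z2 v1 v2 : 1 < z1 -> z1 < z2 ->
  F z1 = Fin v1 -> F z2 = Fin v2 -> v1 * (z2 - 1) = v2 * (z1 - 1).
Proof.
  intros Hz1 Hz12 Hv1 Hv2.
  destruct (Gamma0_slope_le F z1 z2 v2 F_Gamma0 Hz1 Hz12 Hv2) as [w1 [Hw1 Hle1]].
  rewrite Hv1 in Hw1. injection Hw1 as <-.
  destruct (exists_pow_gt z1 z2 Hz1) as [n Hn].
  destruct (persp_triangle_pow z1 v1 Hz1 Hv1 n) as [w [Hw Hwle]].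
  set (q := z1 ^ n) in *.
  destruct (Gamma0_slope_le F z2 q w F_Gamma0 ltac:(lra) Hn Hw) as [w2 [Hw2 Hle2]].
  rewrite Hv2 in Hw2. injection Hw2 as <-.
  assert (H : (q - 1) * (v2 * (z1 - 1)) <= (q - 1) * (v1 * (z2 - 1))).
  { apply Rmult_le_compat_r with (r := z1 - 1) in Hle2; [|lra].
    apply Rmult_le_compat_r with (r := z2 - 1) in Hwle; [|lra]. nra. }
  apply Rmult_le_reg_l in H; lra.
Qed.

Lemma persp_triangle_linear y v : 1 < y -> F y = Fin v ->
  exists c, 0 <= c /\ forall s, 0 < s -> F s = Fin (c * Rabs (s - 1)).
Proof.
  intros Hy Hv. destruct F_Gamma0 as [Hge0 [_ [_ H1]]].
  destruct (persp_triangle_finite y v 2 Hy Hv ltac:(lra)) as [c Hc2].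
  assert (Habove : forall z, 1 < z -> F z = Fin (c * (z - 1))).
  { intros z Hz. destruct (persp_triangle_finite y v z Hy Hv Hz) as [w Hw].
    rewrite Hw. f_equal.
    destruct (Rtotal_order z 2) as [Hlt|[->|Hgt]].
    - pose proof (persp_triangle_slope_eq z 2 w c Hz Hlt Hw Hc2). lra.
    - rewrite Hc2 in Hw. injection Hw as <-. ring.
    - pose proof (persp_triangle_slope_eq 2 z c w ltac:(lra) Hgt Hc2 Hw). lra. }
  exists c. split; [pose proof (Hge0 2 ltac:(lra)) as H; rewrite Hc2 in H; exact H|].
  intros s Hs. destruct (Rtotal_order s 1) as [Hlt|[->|Hgt]].
  - rewrite persp_triangle_inv, Habove by (auto; rewrite <- Rinv_1; apply Rinv_lt_contravar; lra).
    simpl. f_equal. rewrite Rabs_left by lra. field. lra.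
  - rewrite H1, Rminus_diag, Rabs_R0, Rmult_0_r. reflexivity.
  - rewrite Habove, Rabs_pos_eq by lra. reflexivity.
Qed.

Lemma persp_triangle_infinite : (forall y, 1 < y -> F y = PInf) ->
  forall s, 0 < s -> s <> 1 -> F s = PInf.
Proof.
  intros Hinf s Hs Hs1. destruct (Rtotal_order s 1) as [Hlt|[|Hgt]]; [|lra|auto].
  rewrite persp_triangle_inv, Hinf by (auto; rewrite <- Rinv_1; apply Rinv_lt_contravar; lra).
  reflexivity.
Qed.

End PerspTriangle.

(* The value at [0] is pinned down by convexity from below and by the
   recession bound from above. *)
Lemma Gamma0_persp_triangle_classification F : Gamma0 F -> persp_triangle F ->
  (forall th, 0 < th -> leE (F 0) (addE (F th) (recF F th))) ->
  (exists c, 0 <= c /\ forall s, 0 <= s -> F s = Fin (c * Rabs (s - 1))) \/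
  (forall s, 0 <= s -> F s = if Req_EM_T s 1 then Fin 0 else PInf).
Proof.
  intros HF0 Htri Hrec. pose proof (Gamma0_half_le F HF0) as Hhalf.
  destruct (classic (exists y v, 1 < y /\ F y = Fin v)) as [[y [v [Hy Hv]]]|Hno].
  - left. destruct (persp_triangle_linear F HF0 Htri y v Hy Hv) as [c [Hc Hpos]].
    exists c. split; auto.
    intros s Hs. destruct (Rle_lt_or_eq_dec 0 s Hs) as [|<-]; [auto|].
    assert (Hh : F (1 / 2) = Fin (c / 2)).
    { rewrite Hpos, Rabs_left by lra. f_equal. field. }
    assert (Hr : leE (recF F (1 / 2)) (Fin (c / 2))).
    { apply recF_le. intros a Ha. rewrite Hpos, Rabs_pos_eq by nra.
      simpl. right. field. lra. }
    pose proof (leE_trans _ _ _ (Hrec (1 / 2) ltac:(lra))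
                  (leE_addE _ _ _ _ (leE_refl _) Hr)) as Hup.
    rewrite Hh in Hup, Hhalf.
    destruct (F 0) as [u|]; [|contradiction]. simpl in Hup, Hhalf.
    f_equal. rewrite Rminus_0_l, Rabs_Ropp, Rabs_R1. lra.
  - right. pose proof HF0 as [_ [_ [_ H1]]].
    assert (Hinf : forall s, 0 < s -> s <> 1 -> F s = PInf).
    { apply persp_triangle_infinite; auto.
      intros z Hz. destruct (F z) as [w|] eqn:Hw; auto. exfalso. eauto. }
    intros s Hs. destruct (Req_EM_T s 1) as [->|Hs1]; auto.
    destruct (Rle_lt_or_eq_dec 0 s Hs) as [|<-]; [auto|].
    rewrite Hinf in Hhalf by lra. destruct (F 0); [contradiction | reflexivity].
Qed.

Theorem mainTheorem5 :
  (forall F : R -> ER, Gamma0 F ->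
     ((forall s, 0 <= s -> T1 F s = F s) <->
      ((exists c, 0 <= c /\ forall s, 0 <= s -> F s = Fin (c * Rabs (s - 1))) \/
       (forall s, 0 <= s -> F s = if Req_EM_T s 1 then Fin 0 else PInf)))) /\
  (forall G : R -> ER, Gamma0 G ->
     (is_metric_Rplus (HF G) <->
      exists c, 0 < c /\ forall r t, 0 <= r -> 0 <= t -> HF G r t = Fin (c * Rabs (r - t)))).
Proof.
  split.
  - intros F HF0. split.
    + intros Hfix. apply Gamma0_persp_triangle_classification; auto.
      * intros s th Hs Hth. rewrite <- (Hfix s), <- persp_pos by lra.
        apply T1_le_persp; auto; lra.
      * intros th Hth. rewrite <- (Hfix 0), <- persp_r0 by lra.
        apply T1_le_persp; auto; lra.
    + intros [[c [Hc HFc]] | HFi] s Hs; unfold T1.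
      * rewrite (HF_scaled_dist F c), HFc, Rabs_minus_sym by (auto; lra). reflexivity.
      * rewrite (HF_indicator F), HFi by (auto; lra).
        destruct (Req_EM_T 1 s), (Req_EM_T s 1); congruence.
  - intros G HG0. split.
    + intros Hmetric. apply metric_linear; auto; intros.
      * apply HF_subhomogeneous; auto.
      * apply HF_translate; auto.
    + intros [c [Hc HGc]]. exact (is_metric_Rplus_scaled_dist _ c Hc HGc).
Qed.
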